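(* A function $\mathbf F:\mathbb N^{d}\to\mathbb R^{d'}$ is computable in polynomial time if and only if there exist $\mathbf f:\mathbb N^{d+1}\to\mathbb Q^{d'}$, with $\mathbf f(\mathbf m,n)$ computable in polynomial time in unary in $n$, and $g:\mathbb N^{d+1}\to\mathbb Q$ such that: $\|\mathbf f(\mathbf m,n)-\mathbf F(\mathbf m)\|\le g(\mathbf m,n)$ for all $\mathbf m,n$; $0\le g(\mathbf m,n)$ and $g(\mathbf m,n)\to0$ as $n\to+\infty$; and $g$ has a uniform polynomial modulus of convergence $p$.
   Context: $\|\cdot\|$ is the sup-norm. Polynomial-time computability is in the sense of computable analysis: $\mathbf F$ is polynomial-time computable if a Turing machine, given $\mathbf m$ (binary) and $n$, outputs dyadics $q$ with $\|q-\mathbf F(\mathbf m)\|\le 2^{-n}$ in time polynomial in $\ell(m_1),\dots,\ell(m_d),n$ ($\ell$ = binary length). $\mathbf f(\mathbf m,n)$ being polynomial-time computable in unary in $n$ means the same with the time bound polynomial in $\ell(m_1),\dots,\ell(m_d)$, $n$ itself, and the output precision. A function $M:\mathbb N\to\mathbb N$ is a uniform modulus of convergence of $g:\mathbb N^{d+1}\to\mathbb R$ (with $g(\mathbf m,n)\to0$ as $n\to\infty$) if for all $\mathbf m$, $n$ and all $i>M(n)$, $\|g(\mathbf m,i)\|\le 2^{-n}$. *)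

From HB Require Import structures.
From mathcomp Require Import all_boot all_order all_algebra.
From mathcomp Require Import reals.
Set Implicit Arguments. Unset Strict Implicit. Unset Printing Implicit Defensive.
Import Order.TTheory GRing.Theory Num.Theory.
Local Open Scope ring_scope.

(* Binary representation of natural numbers (most significant bit first).
   bits 0 = [:: false], so the binary length l(0) = 1.                *)
Fixpoint bits_aux (fuel n : nat) : seq bool :=
  if fuel is k.+1 then
    (if (n < 2)%N then [:: odd n] else rcons (bits_aux k n./2) (odd n))
  else [::].
Definition bits (n : nat) : seq bool := bits_aux n.+1 n.
Definition blen (n : nat) : nat := size (bits n).

(* The tape alphabet is 'I_(nsym+4), with the
   reserved symbols 0 = blank, 1 = '0', 2 = '1', 3 = '#' (separator);
   states are 'I_(nstate+1), start state ord0, halting state ord_max.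
   A transition gives (new state, written symbol, move right?).       *)
Record TM := {
  tm_nsym : nat;
  tm_nstate : nat;
  tm_delta : 'I_tm_nstate.+1 -> 'I_(tm_nsym.+4) ->
             'I_tm_nstate.+1 * 'I_(tm_nsym.+4) * bool }.

Definition sym (M : TM) := 'I_(tm_nsym M).+4.
Definition blank (M : TM) : sym M := inord 0.
Definition code (M : TM) (c : nat) : sym M := inord c.

(* configuration: state, left part (nearest cell first), head cell, right part *)
Definition config (M : TM) :=
  ('I_(tm_nstate M).+1 * seq (sym M) * sym M * seq (sym M))%type.

Definition tm_step (M : TM) (cf : config M) : config M :=
  let: (q, l, a, r) := cf in
  if q == ord_max then cf else
  let: (q', b, mv) := tm_delta q a in
  if mv then
    match r with [::] => (q', b :: l, blank M, [::])
               | x :: r' => (q', b :: l, x, r') end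
  else
    match l with [::] => (q', [::], blank M, b :: r)
               | x :: l' => (q', l', x, b :: r) end.

Definition tm_init (M : TM) (w : seq nat) : config M :=
  (ord0, [::], head (blank M) (map (code M) w), behead (map (code M) w)).

Definition tm_output (M : TM) (cf : config M) : seq (sym M) :=
  let: (_, _, a, r) := cf in
  take (find (fun x => x == blank M) (a :: r)) (a :: r).

Definition tm_runs (M : TM) (w : seq nat) (t : nat) (v : seq nat) : Prop :=
  let cf := iter t (@tm_step M) (tm_init M w) in
  cf.1.1.1 = ord_max /\ tm_output cf = map (code M) v.

Definition enc_bit (b : bool) : nat := if b then 2%N else 1%N.
Definition enc_bin (n : nat) : seq nat := map enc_bit (bits n).
Definition enc_unary (n : nat) : seq nat := nseq n 2%N.

(* input (m_1,...,m_db ; u_1,...,u_du ; precision p):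
   bin(m_1)#...bin(m_db)# 1^u_1 # ... 1^u_du # 1^p                     *)
Definition enc_input (db du : nat) (ms : db.-tuple nat) (us : du.-tuple nat)
  (p : nat) : seq nat :=
  flatten [seq enc_bin m ++ [:: 3%N] | m <- ms]
  ++ flatten [seq enc_unary u ++ [:: 3%N] | u <- us] ++ enc_unary p.

Definition input_size (db du : nat) (ms : db.-tuple nat) (us : du.-tuple nat)
  (p : nat) : nat :=
  (\sum_(m <- ms) blen m + \sum_(u <- us) u + p)%N.

Definition dyadic := (bool * nat * nat)%type.
Definition dy_val (R : unitRingType) (q : dyadic) : R :=
  (-1) ^+ q.1.1 * (q.1.2)%:R / 2%:R ^+ q.2.
Definition enc_dyadic (q : dyadic) : seq nat :=
  enc_bit q.1.1 :: enc_bin q.1.2 ++ 3%N :: enc_bin q.2 ++ [:: 3%N].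
Definition enc_dyadics (k : nat) (qs : k.-tuple dyadic) : seq nat :=
  flatten [seq enc_dyadic q | q <- qs].

Definition supnorm (R : realDomainType) (k : nat) (v : 'I_k -> R) : R :=
  \big[Num.max/0]_(i < k) `|v i|.

(* Polynomial-time approximability of Phi : N^db x N^du -> R^d', where the
   db arguments are given in binary, the du arguments in unary, and the
   precision p in unary: a TM outputs dyadics q with ||q - Phi|| <= 2^-p in
   time polynomial in l(m_1),...,l(m_db), u_1,...,u_du, p (a polynomial bound
   is expressed as c * (s+1)^c with s the sum of these sizes).          *)
Definition ptime_approx (R : realType) (db du d' : nat)
  (Phi : db.-tuple nat -> du.-tuple nat -> 'I_d' -> R) : Prop :=
  exists (M : TM) (c : nat),
    forall (ms : db.-tuple nat) (us : du.-tuple nat) (p : nat),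
      exists (t : nat) (qs : d'.-tuple dyadic),
        (t <= c * (input_size ms us p).+1 ^ c)%N /\
        tm_runs M (enc_input ms us p) t (enc_dyadics qs) /\
        supnorm (fun i => dy_val R (tnth qs i) - Phi ms us i) <= (2%:R ^+ p)^-1.

Definition ptime_computable (R : realType) (d d' : nat)
  (F : d.-tuple nat -> 'I_d' -> R) : Prop :=
  @ptime_approx R d 0 d' (fun ms _ => F ms).

Definition ptime_computable_unary (R : realType) (d d' : nat)
  (f : d.-tuple nat -> nat -> 'I_d' -> rat) : Prop :=
  @ptime_approx R d 1 d' (fun ms us i => ratr (f ms (tnth us ord0) i)).

Definition tends_to_zero (h : nat -> rat) : Prop :=
  forall eps : rat, 0 < eps -> exists N, forall n, (N <= n)%N -> `|h n| <= eps.

Definition uniform_modulus (d : nat) (g : d.-tuple nat -> nat -> rat)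
  (M : nat -> nat) : Prop :=
  forall m n i, (M n < i)%N -> `|g m i| <= (2%:R ^+ n)^-1.

Definition is_nat_poly (p : nat -> nat) : Prop :=
  exists cs : seq nat, forall n, p n = (\sum_(i < size cs) nth 0 cs i * n ^ i)%N.

From HB Require Import structures.
From mathcomp Require Import all_boot all_order all_algebra.
From mathcomp Require Import reals.
From mathcomp Require Import zify lra.
From Stdlib Require Import ClassicalEpsilon.
Set Implicit Arguments. Unset Strict Implicit. Unset Printing Implicit Defensive.
Import Order.TTheory GRing.Theory Num.Theory.

(* If a machine M computes F, let f(m, n) be the dyadic output of M at precision n and
   g(m, n) = 2^-n, whose uniform modulus is the identity; f is computed in unary in n by
   erasing the precision argument and running M at precision n.
   Conversely, let P with coefficients cs be the modulus of g and K = size cs + sumn cs + 1,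
   so that P(p+1) < (p+2)^K.  To approximate F(m) within 2^-p, write a unary argument
   n >= (p+2)^K and run the machine computing f at precision p+2: the error is at most
   2^-(p+2) + g(m, n) <= 2^-(p+2) + 2^-(p+1).  The unary argument is produced by K rounds,
   each multiplying a unary counter by p+2 by copying a block of p+2 cells once per counter
   cell. *)

Lemma nseq_cat_cons T n (x : T) s : nseq n x ++ x :: s = nseq n.+1 x ++ s.
Proof. by elim: n => //= n ->. Qed.

(** * Machines over natural-number symbols *)

Definition nconfig := (nat * seq nat * nat * seq nat)%type.
Definition ntrans := nat -> nat -> nat * nat * bool.

Definition nstep (h : nat) (tr : ntrans) (c : nconfig) : nconfig :=
  let: (q, l, a, r) := c in
  if q == h then c else
  let: (q', b, mv) := tr q a in
  if mv then (q', b :: l, head 0 r, behead r)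
  else (q', behead l, head 0 l, b :: r).

(* State [q], left part [l], head on the first cell of [rs] (a blank when [rs = [::]]). *)
Definition cfg q l rs : nconfig := (q, l, head 0 rs, behead rs).

Definition config_val (M : TM) (c : config M) : nconfig :=
  let: (q, l, a, r) := c in (val q, map val l, val a, map val r).

Definition ntrans_of (M : TM) : ntrans := fun q a =>
  let: (q', b, mv) := @tm_delta M (inord q) (inord a) in (val q', val b, mv).

Lemma val_blank M : val (blank M) = 0.
Proof. exact: inordK. Qed.

Lemma config_val_step M (c : config M) :
  config_val (tm_step c) = nstep (tm_nstate M) (ntrans_of M) (config_val c).
Proof.
case: c => [[[q l] a] r] /=.
have -> : (val q == tm_nstate M) = (q == ord_max) by [].
case: eqP => // _.
rewrite /ntrans_of !inord_val.
case: (tm_delta q a) => [[q' b] mv].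
by case: mv; [case: r | case: l] => //=; rewrite val_blank.
Qed.

Lemma config_val_iter M (c : config M) k :
  config_val (iter k (@tm_step M) c) =
  iter k (nstep (tm_nstate M) (ntrans_of M)) (config_val c).
Proof. by elim: k => //= k IH; rewrite config_val_step IH. Qed.

Definition TM_of (ns nq : nat) (tr : ntrans) : TM :=
  {| tm_nsym := ns; tm_nstate := nq;
     tm_delta := fun q a => let: (q', b, mv) := tr (val q) (val a) in
                 ((inord q' : 'I_nq.+1), (inord b : 'I_ns.+4), mv) |}.

Definition ntrans_bounded (ns nq : nat) (tr : ntrans) :=
  forall q a, q <= nq -> a < ns.+4 -> (tr q a).1.1 <= nq /\ (tr q a).1.2 < ns.+4.

Definition nconfig_bounded ns nq (c : nconfig) := c.1.1.1 <= nq /\ c.1.2 < ns.+4.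

Lemma config_val_bounded (M : TM) (c : config M) :
  nconfig_bounded (tm_nsym M) (tm_nstate M) (config_val c).
Proof. by case: c => [[[q l] a] r]; split; [exact: (ltn_ord q) | exact: (ltn_ord a)]. Qed.

Lemma nstep_TM_of ns nq tr (c : nconfig) :
  ntrans_bounded ns nq tr -> nconfig_bounded ns nq c ->
  nstep nq (ntrans_of (TM_of ns nq tr)) c = nstep nq tr c.
Proof.
move=> tr_ok; case: c => [[[q l] a] r] [/= hq ha].
rewrite /nstep /ntrans_of /=; case: eqP => // _.
rewrite !inordK //.
have [h1 h2] := tr_ok q a hq ha.
by case: (tr q a) h1 h2 => [[q' b] mv] /= h1 h2; rewrite !inordK.
Qed.

Lemma config_val_iter_TM_of ns nq tr (c : config (TM_of ns nq tr)) k :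
  ntrans_bounded ns nq tr ->
  config_val (iter k (@tm_step _) c) = iter k (nstep nq tr) (config_val c).
Proof.
move=> tr_ok; elim: k => //= k IH.
by rewrite config_val_step -IH nstep_TM_of //; apply: (config_val_bounded (M := TM_of ns nq tr)).
Qed.

Lemma iter_nstep_halted h tr c k : c.1.1.1 = h -> iter k (nstep h tr) c = c.
Proof.
move=> hc; elim: k => //= k ->.
by case: c hc => [[[q l] a] r] /= ->; rewrite /nstep eqxx.
Qed.

(** * Configurations up to trailing blanks *)

Fixpoint strip_blanks (s : seq nat) : seq nat :=
  if s is x :: s' then
    (let t := strip_blanks s' in if (x == 0) && (t == [::]) then [::] else x :: t)
  else [::].

Lemma head_strip_blanks s : head 0 (strip_blanks s) = head 0 s.
Proof. by case: s => //= x s; case: ifP => //= /andP[/eqP -> _]. Qed.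

Lemma behead_strip_blanks s : behead (strip_blanks s) = strip_blanks (behead s).
Proof. by case: s => //= x s; case: ifP => //= /andP[_ /eqP ->]. Qed.

Lemma strip_blanks_cat_blanks s k : strip_blanks (s ++ nseq k 0) = strip_blanks s.
Proof. by elim: s => [|x s IH] /=; [elim: k => //= k -> | rewrite IH]. Qed.

Definition blank_equiv (c1 c2 : nconfig) :=
  [/\ c1.1.1.1 = c2.1.1.1, strip_blanks c1.1.1.2 = strip_blanks c2.1.1.2,
      c1.1.2 = c2.1.2 & strip_blanks c1.2 = strip_blanks c2.2].

Lemma blank_equiv_trans c1 c2 c3 :
  blank_equiv c1 c2 -> blank_equiv c2 c3 -> blank_equiv c1 c3.
Proof. by case=> e1 e2 e3 e4 [f1 f2 f3 f4]; split; congruence. Qed.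

Lemma blank_equiv_nstep h tr c1 c2 :
  blank_equiv c1 c2 -> blank_equiv (nstep h tr c1) (nstep h tr c2).
Proof.
case: c1 => [[[q l] a] r]; case: c2 => [[[q2 l2] a2] r2] [/= <- el <- er].
rewrite /nstep; case: eqP => // _.
case: (tr q a) => [[q' b] []]; split=> //=.
- by rewrite el.
- by rewrite -head_strip_blanks er head_strip_blanks.
- by rewrite -!behead_strip_blanks er.
- by rewrite -!behead_strip_blanks el.
- by rewrite -head_strip_blanks el head_strip_blanks.
- by rewrite er.
Qed.

Lemma blank_equiv_iter h tr c1 c2 k : blank_equiv c1 c2 ->
  blank_equiv (iter k (nstep h tr) c1) (iter k (nstep h tr) c2).
Proof. by move=> e; elim: k => //= k IH; apply: blank_equiv_nstep. Qed.

Lemma blank_equiv_cat_blanks q l s k : blank_equiv (cfg q l (s ++ nseq k 0)) (cfg q l s).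
Proof.
case: s => [|x s]; split=> //=; last by rewrite strip_blanks_cat_blanks.
- by case: k.
- by case: k => //= k; rewrite -(cat0s (nseq k 0)) strip_blanks_cat_blanks.
Qed.

Definition noutput (s : seq nat) := take (find (fun x => x == 0) s) s.

Lemma noutput_strip_blanks s : noutput (strip_blanks s) = noutput s.
Proof.
elim: s => //= x s IH; case: ifP => [/andP[/eqP -> _]|_] //.
by rewrite /noutput /=; case: eqP => // _; congr (_ :: _); exact: IH.
Qed.

Lemma noutput_blank_equiv a r r' :
  strip_blanks r = strip_blanks r' -> noutput (a :: r) = noutput (a :: r').
Proof. by move=> e; rewrite -noutput_strip_blanks /= e -[RHS]noutput_strip_blanks. Qed.

(** * Bounded reachability and sweeps *)

Section Reaches.
Variables (h : nat) (tr : ntrans).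
Local Notation step := (nstep h tr).

Definition reaches (c1 c2 : nconfig) (n : nat) := exists2 k, k <= n & iter k step c1 = c2.

Lemma reaches_refl c : reaches c c 0. Proof. by exists 0. Qed.

Lemma reaches_trans c1 c2 c3 n1 n2 :
  reaches c1 c2 n1 -> reaches c2 c3 n2 -> reaches c1 c3 (n1 + n2).
Proof.
case=> k1 h1 e1 [k2 h2 e2]; exists (k1 + k2); first exact: leq_add.
by rewrite addnC iterD e1 e2.
Qed.

Lemma reaches_le c1 c2 n n' : n <= n' -> reaches c1 c2 n -> reaches c1 c2 n'.
Proof. by move=> le [k hk e]; exists k => //; apply: leq_trans le. Qed.

Lemma reaches_right q l a r q' b : q != h -> tr q a = (q', b, true) ->
  reaches (cfg q l (a :: r)) (cfg q' (b :: l) r) 1.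
Proof. by move=> /negbTE hq e; exists 1; rewrite //= /nstep /= hq e. Qed.

Lemma reaches_left q l a r q' b : q != h -> tr q a = (q', b, false) ->
  reaches (cfg q l (a :: r)) (cfg q' (behead l) (head 0 l :: b :: r)) 1.
Proof. by move=> /negbTE hq e; exists 1; rewrite //= /nstep /= hq e. Qed.

Lemma sweep_right q g s l r : q != h -> {in s, forall x, tr q x = (q, g x, true)} ->
  reaches (cfg q l (s ++ r)) (cfg q (rev (map g s) ++ l) r) (size s).
Proof.
move=> hq; elim: s l => [|x s IH] l hs; first exact: reaches_refl.
rewrite [size _]/= -add1n map_cons rev_cons cat_rcons.
apply: reaches_trans (reaches_right _ _ hq (hs x (mem_head x s))) (IH _ _).
by move=> y ys; apply: hs; rewrite inE ys orbT.
Qed.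

Lemma sweep_left q0 a0 b0 q g s l r :
  q0 != h -> q != h -> tr q0 a0 = (q, b0, false) ->
  {in s, forall x, tr q x = (q, g x, false)} ->
  reaches (cfg q0 (s ++ l) (a0 :: r))
          (cfg q (behead l) (head 0 l :: rev (map g s) ++ b0 :: r)) (size s).+1.
Proof.
move=> hq0 hq; elim: s q0 a0 b0 r hq0 => [|x s IH] q0 a0 b0 r hq0 e0 hs.
  by rewrite -[1]/(0 + 1); apply: reaches_trans (reaches_refl _) (reaches_left _ _ hq0 e0).
rewrite [size _]/= -add1n map_cons rev_cons cat_rcons.
have step1 := reaches_left (x :: s ++ l) r hq0 e0; rewrite [behead _]/= [head _ _]/= in step1.
apply: reaches_trans step1 (IH _ _ _ _ hq (hs x (mem_head x s)) _).
by move=> y ys; apply: hs; rewrite inE ys orbT.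
Qed.

End Reaches.

Definition basic_word (s : seq nat) := all (fun x => x <= 3) s.

Lemma basic_word_lt s n : basic_word s -> all (fun x => x < n.+4) s.
Proof. by move=> /allP h; apply/allP => x /h hx; rewrite ltnS (leq_trans hx). Qed.

Lemma map_val_code M w : basic_word w -> map val (map (code M) w) = w.
Proof.
move=> /(basic_word_lt (tm_nsym M)).
by elim: w => //= x w IH /andP[hx hw]; rewrite inordK // IH.
Qed.

Lemma config_val_init M w : basic_word w -> config_val (tm_init M w) = cfg 0 [::] w.
Proof.
move=> /(map_val_code M); rewrite /tm_init /cfg.
by case: w => [|x w] /=; [rewrite val_blank | case=> -> ->].
Qed.

Lemma tm_runsE M w t v : basic_word v ->
  tm_runs M w t v <->
  (let c := config_val (iter t (@tm_step M) (tm_init M w)) in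
   c.1.1.1 = tm_nstate M /\ noutput (c.1.2 :: c.2) = v).
Proof.
move=> hv; rewrite /tm_runs.
case: (iter t _ _) => [[[q l] a] r] /=.
have -> : (q = ord_max) <-> (val q = tm_nstate M) by split=> [->|e] //; apply: val_inj.
suff -> : (tm_output (q, l, a, r) = map (code M) v) <-> (noutput (val a :: map val r) = v).
  by [].
rewrite /tm_output /noutput -map_cons -map_take find_map.
have -> : find (preim val (fun x => x == 0)) (a :: r) = find (fun x => x == blank M) (a :: r).
  by apply: eq_find => x /=; rewrite -(val_blank M).
split=> [->|e]; first exact: map_val_code.
by apply: (inj_map val_inj); rewrite map_val_code.
Qed.

Definition shift_state off (c : nconfig) : nconfig := (c.1.1.1 + off, c.1.1.2, c.1.2, c.2).

Definition prefix_ntrans (off : nat) (pre : ntrans) (M : TM) : ntrans := fun q a =>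
  if q < off then pre q a else
  let: (q', b, mv) := ntrans_of M (q - off) a in (q' + off, b, mv).

Definition prefix_TM ns off pre M := TM_of ns (tm_nstate M + off) (prefix_ntrans off pre M).

Section Prefix.
Variables (off : nat) (pre : ntrans) (M : TM).
Local Notation halt := (tm_nstate M + off).
Local Notation tr := (prefix_ntrans off pre M).

Lemma prefix_state_not_halting q : q < off -> q != halt.
Proof. by move=> hq; rewrite neq_ltn (leq_trans hq) // leq_addl. Qed.

Lemma prefix_ntrans_pre q a : q < off -> tr q a = pre q a.
Proof. by rewrite /prefix_ntrans => ->. Qed.

Lemma iter_prefix_shift (c : nconfig) k :
  iter k (nstep halt tr) (shift_state off c) =
  shift_state off (iter k (nstep (tm_nstate M) (ntrans_of M)) c).
Proof.
elim: k => //= k ->; case: (iter k _ c) => [[[q l] a] r].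
rewrite /nstep /shift_state /= eqn_add2r; case: eqP => // _.
rewrite /prefix_ntrans ltnNge leq_addl /= addnK.
by case: (ntrans_of M q a) => [[q' b] []].
Qed.

Lemma blank_equiv_start w k :
  blank_equiv (cfg off [:: 0] (w ++ nseq k 0)) (shift_state off (cfg 0 [::] w)).
Proof. by apply: blank_equiv_trans (blank_equiv_cat_blanks _ _ _ _) _; case: w. Qed.

Lemma tm_runs_prefix ns w w' v k B tM :
  ntrans_bounded ns halt tr -> basic_word w -> basic_word w' -> basic_word v ->
  reaches halt tr (cfg 0 [::] w') (cfg off [:: 0] (w ++ nseq k 0)) B ->
  tm_runs M w tM v -> tm_runs (prefix_TM ns off pre M) w' (B + tM) v.
Proof.
move=> tr_ok hw hw' hv [k1 hk1 e1] /(tm_runsE _ _ _ hv) [hs ho].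
apply/(tm_runsE _ _ _ hv) => /=.
rewrite config_val_iter_TM_of // config_val_init //.
have -> : B + tM = B - k1 + (tM + k1) by lia.
rewrite !iterD e1.
have [e_s _ e_a e_r] : blank_equiv (iter tM (nstep halt tr) (cfg off [:: 0] (w ++ nseq k 0)))
    (shift_state off (config_val (iter tM (@tm_step M) (tm_init M w)))).
  by rewrite config_val_iter config_val_init // -iter_prefix_shift;
    apply/blank_equiv_iter/blank_equiv_start.
rewrite iter_nstep_halted; last by rewrite e_s /= hs.
by split; [rewrite e_s /= hs | rewrite e_a (noutput_blank_equiv _ e_r)].
Qed.

End Prefix.

Definition enc_bins (s : seq nat) : seq nat := flatten [seq enc_bin m ++ [:: 3] | m <- s].

Lemma enc_bins_cons m s : enc_bins (m :: s) = enc_bin m ++ 3 :: enc_bins s.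
Proof. by rewrite /enc_bins /= -catA. Qed.

Lemma mem_enc_bin m x : x \in enc_bin m -> (x == 1) || (x == 2).
Proof. by rewrite /enc_bin => /mapP[b _ ->]; case: b. Qed.

Lemma mem_enc_bins s x : x \in enc_bins s -> [|| x == 1, x == 2 | x == 3].
Proof.
move=> /flattenP[t /mapP[m _ ->]]; rewrite mem_cat => /orP[/mem_enc_bin|].
  by case/orP=> ->; rewrite ?orbT.
by rewrite inE => ->; rewrite !orbT.
Qed.

Lemma enc_bins_neq0 s x : x \in enc_bins s -> x != 0.
Proof. by move/mem_enc_bins; case: x. Qed.

Lemma last_enc_bins s : last 3 (enc_bins s) = 3.
Proof. by elim: s => //= m s IH; rewrite enc_bins_cons last_cat. Qed.

Lemma size_enc_bins s : size (enc_bins s) = \sum_(m <- s) blen m + size s.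
Proof.
elim: s => [|m s IH]; first by rewrite big_nil.
by rewrite enc_bins_cons big_cons size_cat /= IH size_map /blen; lia.
Qed.

Definition skip_ntrans (q a : nat) : nat * nat * bool :=
  if a == 3 then (q.+1, a, true) else (q, a, true).

(* States below [d] skip the [d] binary arguments; state [d + q] behaves as state [q] of [tr]. *)
Definition after_skip (d : nat) (tr : ntrans) : ntrans := fun q a =>
  if q < d then skip_ntrans q a else let: (q', b, mv) := tr (q - d) a in (d + q', b, mv).

Lemma after_skip_shift d tr k a :
  after_skip d tr (d + k) a = let: (q', b, mv) := tr k a in (d + q', b, mv).
Proof. by rewrite /after_skip ltnNge leq_addr /= addKn. Qed.

Lemma after_skip_skip d tr q a : q < d -> after_skip d tr q a = skip_ntrans q a.
Proof. by rewrite /after_skip => ->. Qed.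

Lemma reaches_skip_bins h tr d s rest : size s = d -> d <= h ->
  (forall q a, q < d -> tr q a = skip_ntrans q a) ->
  reaches h tr (cfg 0 [::] (enc_bins s ++ rest)) (cfg d (rev (enc_bins s)) rest)
             (size (enc_bins s)).
Proof.
move=> hs hd htr.
suff gen j L : j + size s <= d -> reaches h tr (cfg j L (enc_bins s ++ rest))
    (cfg (j + size s) (rev (enc_bins s) ++ L) rest) (size (enc_bins s)).
  by have := gen 0 [::]; rewrite add0n hs cats0; apply.
elim: s {hs} j L => [|m s IH] j L hjs; first by rewrite addn0; exact: reaches_refl.
have hj : j < d by move: hjs => /=; lia.
have hjh : j != h by rewrite neq_ltn (leq_trans hj hd).
rewrite enc_bins_cons size_cat /= -catA rev_cat rev_cons -cats1 -!catA /=.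
rewrite -!addSnnS -[(size (enc_bin m)).+1]addn1.
apply: reaches_trans (IH _ _ _); last by move: hjs => /=; lia.
rewrite -{2}(map_id (enc_bin m)).
apply: reaches_trans (sweep_right (g := id) _ _ hjh _) (reaches_right _ _ hjh _) => //.
- move=> x hx; rewrite htr // /skip_ntrans.
  by case/orP: (mem_enc_bin hx) => /eqP ->.
- by rewrite htr.
Qed.

Lemma tuple0_nil (us : 0.-tuple nat) : tval us = [::].
Proof. by case: us => -[]. Qed.

Lemma tuple1_seq1 (us : 1.-tuple nat) : tval us = [:: tnth us ord0].
Proof. by case: us => -[|x [|y s]] //= _; rewrite /tnth. Qed.

Lemma enc_input0 d (ms : d.-tuple nat) (us : 0.-tuple nat) p :
  enc_input ms us p = enc_bins ms ++ nseq p 2.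
Proof. by rewrite /enc_input tuple0_nil. Qed.

Lemma enc_input1 d (ms : d.-tuple nat) (us : 1.-tuple nat) p :
  enc_input ms us p = enc_bins ms ++ nseq (tnth us ord0) 2 ++ 3 :: nseq p 2.
Proof. by rewrite /enc_input tuple1_seq1 /= cats0 -catA. Qed.

Lemma input_size0 d (ms : d.-tuple nat) (us : 0.-tuple nat) p :
  input_size ms us p = \sum_(m <- ms) blen m + p.
Proof. by rewrite /input_size tuple0_nil big_nil addn0. Qed.

Lemma input_size1 d (ms : d.-tuple nat) (us : 1.-tuple nat) p :
  input_size ms us p = \sum_(m <- ms) blen m + tnth us ord0 + p.
Proof. by rewrite /input_size tuple1_seq1 big_seq1. Qed.

Lemma basic_word_cat s t : basic_word (s ++ t) = basic_word s && basic_word t.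
Proof. exact: all_cat. Qed.

Lemma basic_word_nseq n x : x <= 3 -> basic_word (nseq n x).
Proof. by move=> hx; rewrite /basic_word all_nseq hx orbT. Qed.

Lemma basic_word_enc_bins s : basic_word (enc_bins s).
Proof. by apply/allP => x /mem_enc_bins; case/or3P => /eqP ->. Qed.

Lemma basic_word_enc_dyadics k (qs : k.-tuple dyadic) : basic_word (enc_dyadics qs).
Proof.
have hb m : all (fun x => x <= 3) (enc_bin m) by apply/allP => x /mem_enc_bin /orP[] /eqP ->.
rewrite /enc_dyadics /basic_word; elim: (tval qs) => //= q s IH.
by rewrite all_cat IH andbT /= all_cat hb /= all_cat hb; case: q.1.1.
Qed.

Section PolyBounded.
Variables (T : Type) (sz : T -> nat).

Definition poly_bounded (f : T -> nat) := exists c, forall x, f x <= c * (sz x).+1 ^ c.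

Lemma poly_bounded_le f g : (forall x, f x <= g x) -> poly_bounded g -> poly_bounded f.
Proof. by move=> le [c hc]; exists c => x; apply: leq_trans (le x) (hc x). Qed.

Lemma poly_bounded_le_size f : (forall x, f x <= sz x) -> poly_bounded f.
Proof. by move=> le; exists 1 => x; rewrite mul1n expn1 ltnW // ltnS. Qed.

Lemma poly_bounded_cst k : poly_bounded (fun=> k).
Proof. by exists k => x; rewrite leq_pmulr // expn_gt0. Qed.

Lemma poly_boundedD f g : poly_bounded f -> poly_bounded g ->
  poly_bounded (fun x => f x + g x).
Proof.
move=> [c1 h1] [c2 h2]; exists (c1 + c2) => x; rewrite mulnDl.
apply: leq_add; [apply: leq_trans (h1 x) _ | apply: leq_trans (h2 x) _];
  by rewrite leq_mul2l leq_pexp2l ?orbT // ?leq_addr ?leq_addl.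
Qed.

Lemma poly_boundedS f : poly_bounded f -> poly_bounded (fun x => (f x).+1).
Proof.
by move=> hf; apply: poly_bounded_le (poly_boundedD hf (poly_bounded_cst 1)) => x; rewrite addn1.
Qed.

Lemma poly_boundedM f g : poly_bounded f -> poly_bounded g ->
  poly_bounded (fun x => f x * g x).
Proof.
move=> [c1 h1] [c2 h2]; exists (c1 * c2 + (c1 + c2)) => x.
apply: leq_trans (leq_mul (h1 x) (h2 x)) _.
rewrite mulnACA -expnD; apply: leq_mul; first exact: leq_addr.
by apply: leq_pexp2l; last exact: leq_addl.
Qed.

Lemma poly_boundedX f k : poly_bounded f -> poly_bounded (fun x => f x ^ k).
Proof.
move=> hf; elim: k => [|k IH]; first exact: poly_bounded_cst.
by apply: poly_bounded_le (poly_boundedM IH hf) => x; rewrite expnSr.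
Qed.

Lemma poly_bounded_sum n (F : nat -> T -> nat) : (forall i, poly_bounded (F i)) ->
  poly_bounded (fun x => \sum_(0 <= i < n) F i x).
Proof.
move=> hF; elim: n => [|n IH].
  by apply: poly_bounded_le (poly_bounded_cst 0) => x; rewrite big_geq.
by apply: poly_bounded_le (poly_boundedD IH (hF n)) => x; rewrite big_nat_recr.
Qed.

End PolyBounded.

Ltac poly_bounded := repeat first
  [ apply: poly_bounded_cst | apply: poly_boundedD | apply: poly_boundedS | apply: poly_boundedM
  | apply: poly_boundedX | apply: poly_bounded_sum => ?
  | apply: poly_bounded_le_size => ?; lia ].

Section Estimates.
Local Open Scope ring_scope.

Lemma supnorm_le (R : realDomainType) k (v : 'I_k -> R) e :
  0 <= e -> (forall i, `|v i| <= e) -> supnorm v <= e.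
Proof. by move=> he hv; rewrite /supnorm; elim/big_ind: _ => // x y hx hy; rewrite ge_max hx. Qed.

Lemma supnorm_ge0 (R : realDomainType) k (v : 'I_k -> R) : 0 <= supnorm v.
Proof. by rewrite /supnorm; elim/big_ind: _ => // x y hx hy; rewrite le_max hx. Qed.

Lemma ler_supnorm (R : realDomainType) k (v : 'I_k -> R) i : `|v i| <= supnorm v.
Proof. by rewrite /supnorm (bigD1 i) //= le_max lexx. Qed.

Lemma supnorm_sub_le (R : realDomainType) k (u v w : 'I_k -> R) e1 e2 :
  supnorm (fun i => u i - v i) <= e1 -> supnorm (fun i => v i - w i) <= e2 ->
  supnorm (fun i => u i - w i) <= e1 + e2.
Proof.
move=> h1 h2; apply: supnorm_le => [|i].
  by rewrite addr_ge0 // ?(le_trans (supnorm_ge0 _) h1) ?(le_trans (supnorm_ge0 _) h2).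
rewrite -(subrKA (v i)) (le_trans (ler_normD _ _)) // lerD //.
- exact: le_trans (ler_supnorm (fun i => u i - v i) i) h1.
- exact: le_trans (ler_supnorm (fun i => v i - w i) i) h2.
Qed.

Lemma pow2V_ge0 (R : numFieldType) n : 0 <= (2%:R ^+ n : R)^-1.
Proof. by rewrite invr_ge0 exprn_ge0 // ler0n. Qed.

Lemma pow2V_le (R : numFieldType) m n : (m <= n)%N -> (2%:R ^+ n : R)^-1 <= (2%:R ^+ m)^-1.
Proof.
by move=> hmn; rewrite lef_pV2 ?posrE ?exprn_gt0 ?ltr0n // ler_eXn2l // ltr1n.
Qed.

Lemma pow2V_addSS (R : realFieldType) p :
  (2%:R ^+ p.+2 : R)^-1 + (2%:R ^+ p.+1)^-1 <= (2%:R ^+ p)^-1.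
Proof.
have := pow2V_ge0 R p; rewrite !exprS !invfM -div1r.
by set x := (2%:R ^+ p : R)^-1 => hx; lra.
Qed.

Lemma pow2V_tends_to_zero : tends_to_zero (fun n => (2%:R ^+ n : rat)^-1).
Proof.
move=> eps heps; exists (Num.bound eps^-1) => n hn.
rewrite ger0_norm ?pow2V_ge0 // -[leRHS]invrK lef_pV2 ?posrE ?invr_gt0 ?exprn_gt0 //.
exact/ltW/upper_nthrootP.
Qed.

Lemma ratr_dy_val (R : realType) (q : dyadic) : ratr (dy_val rat q) = dy_val R q.
Proof. by rewrite /dy_val fmorph_div rmorphM rmorphXn rmorphN1 !rmorph_nat rmorphXn rmorph_nat. Qed.

Lemma ratr_pow2V (R : realType) n : ratr ((2%:R ^+ n : rat)^-1) = (2%:R ^+ n : R)^-1.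
Proof. by rewrite fmorphV rmorphXn rmorph_nat. Qed.

End Estimates.

(** * From a computable function to a rational approximation scheme *)

Definition poly_modulus_approx (R : realType) (d d' : nat)
  (F : d.-tuple nat -> 'I_d' -> R) (f : d.-tuple nat -> nat -> 'I_d' -> rat)
  (g : d.-tuple nat -> nat -> rat) : Prop :=
  ptime_computable_unary R f /\
  (forall m n, supnorm (fun i => ratr (f m n i) - F m i) <= ratr (g m n))%R /\
  (forall m n, 0 <= g m n)%R /\
  (forall m, tends_to_zero (g m)) /\
  (exists p : nat -> nat, is_nat_poly p /\ uniform_modulus g p).

(* Started right after the binary arguments [W], turns [W 1^u # 1^p] into [W 1^u]: go right
   to the end, erase back to the separator, then return to the first cell. *)
Definition erase_prec_tr (k a : nat) : nat * nat * bool :=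
  match k with
  | 0 => if a == 3 then (1, 3, true) else (0, a, true)
  | 1 => if a == 0 then (2, 0, false) else (1, a, true)
  | 2 => if a == 3 then (3, 0, false) else (2, 0, false)
  | _ => if a == 0 then (4, 0, true) else (3, a, false)
  end.

Definition erase_prec_TM (d : nat) (M : TM) : TM :=
  prefix_TM (tm_nsym M) (d + 4) (after_skip d erase_prec_tr) M.

Section ErasePrecision.
Variables (d : nat) (M : TM).
Local Notation halt := (tm_nstate M + (d + 4)).
Local Notation tr := (prefix_ntrans (d + 4) (after_skip d erase_prec_tr) M).

Lemma erase_prec_trE k a : k < 4 ->
  tr (d + k) a = let: (q', b, mv) := erase_prec_tr k a in (d + q', b, mv).
Proof. by move=> hk; rewrite prefix_ntrans_pre ?after_skip_shift // ltn_add2l. Qed.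

Lemma erase_prec_tr0 a : tr d a = if a == 3 then (d + 1, 3, true) else (d, a, true).
Proof.
by have := erase_prec_trE a (isT : 0 < 4); rewrite addn0 /= => ->; case: ifP; rewrite ?addn0.
Qed.

Lemma erase_prec_bounded : ntrans_bounded (tm_nsym M) halt tr.
Proof.
move=> q a hq ha; rewrite /prefix_ntrans; case: ltnP => hqo; last first.
  rewrite /ntrans_of; case: (tm_delta _ _) => [[q' b] mv] /=.
  by split; [rewrite leq_add2r -ltnS | exact: ltn_ord].
rewrite /after_skip /skip_ntrans; case: ltnP => hqd.
  by case: ifP => _ /=; split=> //; lia.
have : q - d < 4 by lia.
by case: (q - d) => [|[|[|[|k]]]] //= _; case: ifP => _ /=; split=> //; lia.
Qed.

Lemma reaches_erase_precision (L : seq nat) u p : {in L, forall x, x != 0} ->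
  reaches halt tr (cfg d L (nseq u 2 ++ 3 :: nseq p 2))
                  (cfg (d + 4) [:: 0] (rev L ++ nseq u 2 ++ nseq p.+2 0))
                  (size L + 2 * (u + p) + 4).
Proof.
move=> hL.
have [ne0 ne1 ne2 ne3] : [/\ d != halt, d + 1 != halt, d + 2 != halt & d + 3 != halt].
  by split; apply: prefix_state_not_halting; lia.
have r1 : reaches halt tr (cfg d L (nseq u 2 ++ 3 :: nseq p 2 ++ [::]))
                          (cfg (d + 1) (3 :: nseq u 2 ++ L) (nseq p 2 ++ [::])) (u + 1).
  have s1 := @sweep_right halt tr d id (nseq u 2) L (3 :: nseq p 2 ++ [::]) ne0.
  rewrite map_id rev_nseq size_nseq in s1.
  apply: reaches_trans (s1 _) (reaches_right _ _ ne0 _); last by rewrite erase_prec_tr0.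
  by move=> x /nseqP[-> _]; rewrite erase_prec_tr0.
have r2 : reaches halt tr (cfg (d + 1) (3 :: nseq u 2 ++ L) (nseq p 2 ++ [::]))
                          (cfg (d + 1) (nseq p 2 ++ 3 :: nseq u 2 ++ L) [:: 0]) p.
  have := @sweep_right halt tr (d + 1) id (nseq p 2) (3 :: nseq u 2 ++ L) [::] ne1.
  rewrite map_id rev_nseq size_nseq; apply=> x /nseqP[-> _]; exact: erase_prec_trE.
have r3 : reaches halt tr (cfg (d + 1) (nseq p 2 ++ 3 :: nseq u 2 ++ L) [:: 0])
                          (cfg (d + 2) (nseq u 2 ++ L) (3 :: nseq p 0 ++ [:: 0])) p.+1.
  have := @sweep_left halt tr _ 0 0 _ (fun=> 0) (nseq p 2) (3 :: nseq u 2 ++ L) [::] ne1 ne2.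
  rewrite map_nseq rev_nseq size_nseq; apply; first by rewrite erase_prec_trE.
  by move=> x /nseqP[-> _]; rewrite erase_prec_trE.
have r4 : reaches halt tr (cfg (d + 2) (nseq u 2 ++ L) (3 :: nseq p 0 ++ [:: 0]))
            (cfg (d + 3) [::] (0 :: rev (nseq u 2 ++ L) ++ 0 :: nseq p 0 ++ [:: 0]))
            (size (nseq u 2 ++ L)).+1.
  have := @sweep_left halt tr _ 3 0 _ id (nseq u 2 ++ L) [::] (nseq p 0 ++ [:: 0]) ne2 ne3.
  rewrite map_id cats0; apply; first by rewrite erase_prec_trE.
  by move=> x; rewrite mem_cat => /orP[/nseqP[-> _]|/hL /negbTE hx]; rewrite erase_prec_trE //= ?hx.
have r5 := reaches_right [::] (rev (nseq u 2 ++ L) ++ 0 :: nseq p 0 ++ [:: 0]) ne3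
              (erase_prec_trE 0 (isT : 3 < 4)).
have -> : rev L ++ nseq u 2 ++ nseq p.+2 0 = rev (nseq u 2 ++ L) ++ 0 :: nseq p 0 ++ [:: 0].
  by rewrite rev_cat rev_nseq -catA; congr (_ ++ (_ ++ _)); elim: (p) => //= k ->.
rewrite -{1}(cats0 (nseq p 2)).
apply: reaches_le (reaches_trans r1 (reaches_trans r2 (reaches_trans r3 (reaches_trans r4 r5)))).
by rewrite size_cat size_nseq; lia.
Qed.

Lemma erase_prec_TM_runs (ms : seq nat) u p t v : size ms = d -> basic_word v ->
  tm_runs M (enc_bins ms ++ nseq u 2) t v ->
  tm_runs (erase_prec_TM d M) (enc_bins ms ++ nseq u 2 ++ 3 :: nseq p 2)
          (2 * (size (enc_bins ms) + u + p) + 4 + t) v.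
Proof.
move=> hms hv.
have skip := @reaches_skip_bins halt tr d ms (nseq u 2 ++ 3 :: nseq p 2) hms.
have erase := @reaches_erase_precision (rev (enc_bins ms)) u p.
rewrite revK catA in erase.
apply: tm_runs_prefix (reaches_le _ (reaches_trans (skip _ _) (erase _))) => //.
- exact: erase_prec_bounded.
- by rewrite basic_word_cat basic_word_enc_bins basic_word_nseq.
- by rewrite !basic_word_cat basic_word_enc_bins basic_word_nseq //=; exact: basic_word_nseq.
- by rewrite size_rev; lia.
- by lia.
- by move=> q a hq; rewrite prefix_ntrans_pre ?after_skip_skip //; lia.
- by move=> x; rewrite mem_rev; exact: enc_bins_neq0.
Qed.

End ErasePrecision.

Lemma ptime_computable_approx (R : realType) d d' (F : d.-tuple nat -> 'I_d' -> R) :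
  ptime_computable F -> exists f g, poly_modulus_approx F f g.
Proof.
case=> M [c HM].
have out (ms : d.-tuple nat) (n : nat) : {tq : nat * d'.-tuple dyadic |
    [/\ tq.1 <= c * (input_size ms [tuple] n).+1 ^ c,
        tm_runs M (enc_input ms [tuple] n) tq.1 (enc_dyadics tq.2) &
        (supnorm (fun i => dy_val R (tnth tq.2 i) - F ms i) <= (2%:R ^+ n)^-1)%R]}.
  apply: constructive_indefinite_description.
  by have [t [qs [? [? ?]]]] := HM ms [tuple] n; exists (t, qs).
pose f ms n i := dy_val rat (tnth (sval (out ms n)).2 i).
have ratr_f ms n i : ratr (f ms n i) = dy_val R (tnth (sval (out ms n)).2 i).
  exact: ratr_dy_val.
exists f, (fun _ n => (2%:R ^+ n)^-1)%R; split; last split; last split; last split.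
- have [c' hc'] : poly_bounded (fun x : nat * nat * nat => x.1.1 + x.1.2 + x.2)
      (fun x => 2 * (x.1.1 + d + x.1.2 + x.2) + 4 + c * (x.1.1 + x.1.2).+1 ^ c).
    by poly_bounded.
  exists (erase_prec_TM d M), c' => ms us p; set u := tnth us ord0.
  have [ht hrun _] := svalP (out ms u); set tq := sval (out ms u) in ht hrun.
  exists (2 * (size (enc_bins ms) + u + p) + 4 + tq.1), tq.2; split; [|split].
  + rewrite input_size1 size_enc_bins size_tuple; rewrite input_size0 in ht.
    by apply: leq_trans (hc' (_, u, p)); rewrite /= leq_add2l.
  + rewrite enc_input1; apply: erase_prec_TM_runs (size_tuple _) (basic_word_enc_dyadics _) _.
    by rewrite enc_input0 in hrun.
  + apply: supnorm_le (pow2V_ge0 _ _) _ => i.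
    by rewrite ratr_f subrr normr0 pow2V_ge0.
- move=> ms n; have [_ _ hsup] := svalP (out ms n).
  by rewrite ratr_pow2V /supnorm; under eq_bigr do rewrite ratr_f.
- by move=> _ n; exact: pow2V_ge0.
- by move=> _; exact: pow2V_tends_to_zero.
- exists id; split; first by exists [:: 0; 1] => n; rewrite !big_ord_recr big_ord0 /=; lia.
  by move=> ms n i /ltnW hi; rewrite ger0_norm ?pow2V_ge0 // pow2V_le.
Qed.

(** * The machine for the converse direction *)

(* Relative to the end [d] of the binary arguments, the preprocessing of the converse
   direction has a setup phase (states [0..6]), [K.+1] blocks of eight states for the
   rounds, and an output phase of four states. *)
Definition round_st (r j : nat) := 7 + r * 8 + j.
Definition out_st (K k : nat) := 7 + K.+1 * 8 + k.

(* Symbols: 4 bounds the block [5^b]; 6 marks a block cell being copied; 7 is a counter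
   cell, 10 a consumed one; 9 is a newly produced counter cell; 11 ends the work area. *)
Definition setup_tr (k a : nat) : nat * nat * bool :=
  match k with
  | 0 => (1, a, false)
  | 1 => (2, a, true)
  | 2 => if a == 2 then (2, 5, true) else (3, 5, true)
  | 3 => (4, 5, true)
  | 4 => (5, 4, true)
  | 5 => (6, 7, true)
  | _ => (round_st 0 0, 11, false)
  end.

Definition round_tr (K r j a : nat) : nat * nat * bool :=
  match j with
  | 0 => if a == 7 then (round_st r 1, 10, false)
         else if a == 11 then (round_st r 6, 10, true) else (round_st r 0, a, true)
  | 1 => if (a == 3) || (a == 0) then (round_st r 2, a, true) else (round_st r 1, a, false)
  | 2 => if a == 5 then (round_st r 3, 6, true) else (round_st r 5, a, false)
  | 3 => if a == 0 then (round_st r 4, 9, false) else (round_st r 3, a, true)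
  | 4 => if a == 6 then (round_st r 2, a, true) else (round_st r 4, a, false)
  | 5 => if a == 6 then (round_st r 5, 5, false)
         else (if r < K then round_st r 0 else out_st K 0, a, true)
  | 6 => if a == 9 then (round_st r 6, 7, true) else (round_st r 7, 11, false)
  | _ => if a == 7 then (round_st r 7, a, false)
         else if r.+1 < K then (round_st r.+1 0, a, true) else (round_st K 1, a, false)
  end.

Definition output_tr (K k a : nat) : nat * nat * bool :=
  match k with
  | 0 => if a == 0 then (out_st K 1, 0, false) else (out_st K 0, a, true)
  | 1 => if a == 9 then (out_st K 1, 2, false) else (out_st K 2, 3, false)
  | 2 => if a == 3 then (out_st K 3, 3, false)
         else if a == 0 then (out_st K 4, 0, true) else (out_st K 2, 2, false)
  | _ => if a == 0 then (out_st K 4, 0, true) else (out_st K 3, a, false)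
  end.

Definition unary_arg_tr (K : nat) : ntrans := fun q a =>
  if q < 7 then setup_tr q a
  else if q < out_st K 0 then round_tr K ((q - 7) %/ 8) ((q - 7) %% 8) a
  else output_tr K (q - out_st K 0) a.

Definition unary_arg_TM (d K : nat) (N : TM) : TM :=
  prefix_TM (tm_nsym N + 8) (d + out_st K 4) (after_skip d (unary_arg_tr K)) N.

Section UnaryArgMachine.
Variables (d K : nat) (N : TM).
Local Notation halt := (tm_nstate N + (d + out_st K 4)).
Local Notation tr := (prefix_ntrans (d + out_st K 4) (after_skip d (unary_arg_tr K)) N).
Local Notation reaches := (reaches halt tr).
Local Notation st r j := (d + round_st r j).

Lemma unary_arg_bounded : ntrans_bounded (tm_nsym N + 8) halt tr.
Proof.
move=> q a hq ha; rewrite /prefix_ntrans; case: ltnP => hqo; last first.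
  rewrite /ntrans_of; case: (tm_delta _ _) => [[q' b] mv] /=; split.
    by rewrite leq_add2r -ltnS.
  by apply: leq_trans (ltn_ord b) _; lia.
suff : (unary_arg_tr K (q - d) a).1.1 <= out_st K 4 /\
       ((unary_arg_tr K (q - d) a).1.2 == a) || ((unary_arg_tr K (q - d) a).1.2 <= 11).
  rewrite /after_skip /skip_ntrans; case: ltnP => hqd.
    by case: ifP => _ _ /=; split=> //; lia.
  case: (unary_arg_tr _ _ _) => [[q' b] mv] /= [h1 /orP[/eqP ->|h2]]; split=> //; lia.
rewrite /unary_arg_tr; case: ltnP => h1.
  case: (q - d) h1 => [|[|[|[|[|[|[|k]]]]]]] //= _; try case: ifP => _ /=;
    by split=> //; rewrite /out_st /round_st; lia.
case: ltnP => h2; last first.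
  have : q - d - out_st K 0 < 4 by move: hqo; rewrite /out_st; lia.
  case: (_ - _) => [|[|[|[|k]]]] //= _; repeat case: ifP => _ /=;
    by split=> //; rewrite /out_st /round_st; lia.
have hr : (q - d - 7) %/ 8 <= K by rewrite -ltnS ltn_divLR //; move: h2; rewrite /out_st; lia.
move: ((q - d - 7) %/ 8) hr ((q - d - 7) %% 8) => r hr j.
by case: j => [|[|[|[|[|[|[|j]]]]]]] /=; repeat case: ifP => _ /=;
  rewrite ?eqxx ?orTb; split=> //; rewrite /out_st /round_st; lia.
Qed.

Lemma round_not_halting r j : r <= K -> j < 8 -> st r j != halt.
Proof. by move=> hr hj; apply: prefix_state_not_halting; rewrite /round_st /out_st; lia. Qed.

Lemma setup_not_halting k : k < 7 -> d + k != halt.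
Proof. by move=> hk; apply: prefix_state_not_halting; rewrite /out_st; lia. Qed.

Lemma output_not_halting k : k < 4 -> d + out_st K k != halt.
Proof. by move=> hk; apply: prefix_state_not_halting; rewrite /out_st; lia. Qed.

Lemma unary_arg_trE q a : q < out_st K 4 ->
  tr (d + q) a = let: (q', b, mv) := unary_arg_tr K q a in (d + q', b, mv).
Proof. by move=> hq; rewrite prefix_ntrans_pre ?after_skip_shift // ltn_add2l. Qed.

Lemma setup_trE k a : k < 7 ->
  tr (d + k) a = let: (q', b, mv) := setup_tr k a in (d + q', b, mv).
Proof.
by move=> hk; rewrite unary_arg_trE /unary_arg_tr ?hk //; move: hk; rewrite /out_st; lia.
Qed.

Lemma round_trE r j a : r <= K -> j < 8 ->
  tr (st r j) a = let: (q', b, mv) := round_tr K r j a in (d + q', b, mv).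
Proof.
move=> hr hj; rewrite unary_arg_trE /unary_arg_tr /round_st /out_st; last by lia.
have [-> ->] : (7 + r * 8 + j < 7) = false /\ 7 + r * 8 + j < 7 + K.+1 * 8 + 0.
  by split; [apply/negbTE|]; lia.
by rewrite -addnA addKn divnMDl // modnMDl divn_small // modn_small // addn0.
Qed.

Lemma output_trE k a : k < 4 ->
  tr (d + out_st K k) a = let: (q', b, mv) := output_tr K k a in (d + q', b, mv).
Proof.
move=> hk; rewrite unary_arg_trE /unary_arg_tr /out_st; last by lia.
have [-> ->] : (7 + K.+1 * 8 + k < 7) = false /\ (7 + K.+1 * 8 + k < 7 + K.+1 * 8 + 0) = false.
  by split; apply/negbTE; lia.
by rewrite addn0 addKn.
Qed.

End UnaryArgMachine.

(* Number of consumed counter cells after [r] rounds, each round also consuming the end marker. *)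
Definition spent (b r : nat) := \sum_(0 <= i < r) (b ^ i).+1.

Lemma spentS b r : spent b r.+1 = spent b r + b ^ r + 1.
Proof. by rewrite /spent big_nat_recr //= addn1 addnS. Qed.

Lemma leq_spent b r s : r <= s -> spent b r <= spent b s.
Proof. by move=> hrs; rewrite /spent [X in _ <= X](@big_cat_nat _ _ _ r) //= leq_addr. Qed.

Definition work_bound (b K : nat) := 2 * b + 2 + spent b K + b ^ K.
Definition round_cost (b K : nat) :=
  b ^ K * ((b + 3) * (2 * work_bound b K + 3)) + 2 * b ^ K + 3.

Section Rounds.
Variables (d K : nat) (N : TM) (b x0 : nat) (L0 : seq nat).
Hypothesis hx0 : (x0 == 3) || (x0 == 0).
Local Notation halt := (tm_nstate N + (d + out_st K 4)).
Local Notation tr := (prefix_ntrans (d + out_st K 4) (after_skip d (unary_arg_tr K)) N).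
Local Notation reaches := (reaches halt tr).
Local Notation st r j := (d + round_st r j).
Local Notation Lx := (x0 :: L0).

(* The tape reads [rev Lx, 5^b, 4, 10^g, 7^a, 11, 9^c], the head on the first cell 7.
   Round [r] turns each counter cell 7 into 10 and appends a copy [9^b] of the block, so
   that the [b^r] counters of round [r] become the [b^r.+1] counters of round [r.+1]. *)
Definition round_cfg r g a c :=
  cfg (st r 0) (nseq g 10 ++ 4 :: nseq b 5 ++ Lx) (nseq a 7 ++ 11 :: nseq c 9).

Section Round.
Variables (r : nat) (hr : r <= K).
Local Notation ne j := (@round_not_halting d K N r j hr).
Local Notation trR j a := (@round_trE d K N r j a hr).

Lemma reaches_copy_cell L Mid i k c : {in Mid, forall x, (x != 0) && (x != 6)} ->
  reaches (cfg (st r 2) (nseq i 6 ++ L) (nseq k.+1 5 ++ 4 :: Mid ++ nseq c 9))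
          (cfg (st r 2) (nseq i.+1 6 ++ L) (nseq k 5 ++ 4 :: Mid ++ nseq c.+1 9))
          (2 * (k + 1 + size Mid + c) + 3).
Proof.
move=> hM; set Y := nseq k 5 ++ 4 :: Mid ++ nseq c 9.
have hY : {in Y, forall x, (x != 0) && (x != 6)}.
  by move=> x; rewrite !(mem_cat, inE) => /or3P[/nseqP[-> _]|/eqP ->|/orP[/hM|/nseqP[-> _]]].
have r1 := reaches_right (nseq i 6 ++ L) Y (ne 2 isT) (trR 2 5 isT).
have r2 := @sweep_right halt tr (st r 3) id Y (6 :: nseq i 6 ++ L) [::] (ne 3 isT).
rewrite map_id cats0 in r2.
have r3 := @sweep_left halt tr (st r 3) 0 9 (st r 4) id (rev Y) (6 :: nseq i 6 ++ L) [::]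
             (ne 3 isT) (ne 4 isT) (trR 3 0 isT).
rewrite map_id revK size_rev /= in r3.
have r4 := reaches_right (nseq i 6 ++ L) (Y ++ [:: 9]) (ne 4 isT) (trR 4 6 isT).
have -> : nseq k 5 ++ 4 :: Mid ++ nseq c.+1 9 = Y ++ [:: 9].
  by rewrite /Y -catA /= -catA nseq_cat_cons cats0.
apply: reaches_le (reaches_trans r1 (reaches_trans (r2 _) (reaches_trans (r3 _) r4))).
- by rewrite /Y size_cat /= size_cat !size_nseq; lia.
- by move=> x /hY /andP[/negbTE hx _]; rewrite round_trE //= hx.
- by move=> x; rewrite mem_rev => /hY /andP[_ /negbTE hx]; rewrite round_trE //= hx.
Qed.

Lemma reaches_copy_block L Mid i k c Z : {in Mid, forall x, (x != 0) && (x != 6)} ->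
  k + 1 + size Mid + c + k <= Z ->
  reaches (cfg (st r 2) (nseq i 6 ++ L) (nseq k 5 ++ 4 :: Mid ++ nseq c 9))
          (cfg (st r 2) (nseq (i + k) 6 ++ L) (4 :: Mid ++ nseq (c + k) 9))
          (k * (2 * Z + 3)).
Proof.
move=> hM; elim: k i c => [|k IH] i c hZ; first by rewrite !addn0; exact: reaches_refl.
rewrite -(addSnnS i) -(addSnnS c).
apply: reaches_le (reaches_trans (reaches_copy_cell L i k c hM) (IH i.+1 c.+1 _)); last by lia.
by rewrite mulSn; nia.
Qed.

Lemma reaches_block_start q0 a0 b0 g rest : q0 != halt -> tr q0 a0 = (st r 1, b0, false) ->
  reaches (cfg q0 (nseq g 10 ++ 4 :: nseq b 5 ++ Lx) (a0 :: rest))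
          (cfg (st r 2) Lx (nseq b 5 ++ 4 :: nseq g 10 ++ b0 :: rest)) (g + b + 3).
Proof.
move=> hq0 e0.
have r1 := @sweep_left halt tr q0 a0 b0 (st r 1) id (nseq g 10 ++ 4 :: nseq b 5) Lx rest
             hq0 (ne 1 isT) e0.
rewrite map_id -catA /= in r1.
have r2 := reaches_right L0 (rev (nseq g 10 ++ 4 :: nseq b 5) ++ b0 :: rest) (ne 1 isT)
             (_ : tr (st r 1) x0 = (st r 2, x0, true)).
rewrite rev_cat rev_cons !rev_nseq -cats1 -!catA /= in r1 r2.
apply: reaches_le (reaches_trans (r1 _) (r2 _)).
- by rewrite size_cat /= !size_nseq; lia.
- by move=> x; rewrite !(mem_cat, inE) => /or3P[/nseqP[-> _]|/eqP ->|/nseqP[-> _]];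
    rewrite round_trE.
- by rewrite round_trE //= hx0.
Qed.

Lemma reaches_restore_block rest :
  reaches (cfg (st r 2) (nseq b 6 ++ Lx) (4 :: rest))
          (cfg (d + (if r < K then round_st r 0 else out_st K 0)) Lx (nseq b 5 ++ 4 :: rest))
          (b + 2).
Proof.
have r1 := @sweep_left halt tr (st r 2) 4 4 (st r 5) (fun=> 5) (nseq b 6) Lx rest
             (ne 2 isT) (ne 5 isT) (trR 2 4 isT).
rewrite map_nseq rev_nseq size_nseq /= in r1.
have r2 := reaches_right L0 (nseq b 5 ++ 4 :: rest) (ne 5 isT)
             (_ : tr (st r 5) x0 = (d + (if r < K then round_st r 0 else out_st K 0), x0, true)).
apply: reaches_le (reaches_trans (r1 _) (r2 _)); first by lia.
- by move=> x /nseqP[-> _]; rewrite round_trE.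
- by rewrite round_trE //=; case/orP: hx0 => /eqP ->.
Qed.

Lemma reaches_consume_counter g a c Z : r < K ->
  b + 1 + g.+1 + a + 1 + (c + b) <= Z ->
  reaches (round_cfg r g a.+1 c) (round_cfg r g.+1 a (c + b)) ((b + 3) * (2 * Z + 3)).
Proof.
move=> hrK hZ.
set Mid := nseq g.+1 10 ++ nseq a 7 ++ [:: 11].
have hM : {in Mid, forall x, (x != 0) && (x != 6)}.
  by move=> x; rewrite !mem_cat mem_seq1 => /or3P[/nseqP[-> _]|/nseqP[-> _]|/eqP ->].
have r1 := reaches_block_start g (nseq a 7 ++ 11 :: nseq c 9) (ne 0 isT) (trR 0 7 isT).
have eMid : nseq g 10 ++ 10 :: nseq a 7 ++ 11 :: nseq c 9 = Mid ++ nseq c 9.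
  by rewrite /Mid -!catA nseq_cat_cons.
rewrite eMid in r1.
have r2 := @reaches_copy_block Lx Mid 0 b c Z hM.
have r3 := reaches_restore_block (Mid ++ nseq (c + b) 9).
rewrite add0n in r2; rewrite hrK in r3; rewrite /Mid -!catA /= in r1 r2 r3.
have r4 := @sweep_right halt tr (st r 0) id (nseq b 5 ++ 4 :: nseq g.+1 10) Lx
             (nseq a 7 ++ 11 :: nseq (c + b) 9) (ne 0 isT).
rewrite map_id rev_cat rev_cons !rev_nseq -cats1 -!catA cat1s in r4.
rewrite /round_cfg; apply: reaches_le (reaches_trans r1 (reaches_trans (r2 _)
  (reaches_trans r3 (r4 _)))).
- by rewrite /Mid !size_cat /= !size_nseq; nia.
- by rewrite /Mid !size_cat /= !size_nseq; lia.
- by move=> x; rewrite mem_cat in_cons => /or3P[/nseqP[-> _]|/eqP ->|/nseqP[-> _]];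
    rewrite round_trE.
Qed.

Lemma reaches_consume_counters g a c Z : r < K ->
  b + 1 + (g + a) + 1 + (c + a * b) <= Z ->
  reaches (round_cfg r g a c) (round_cfg r (g + a) 0 (c + a * b)) (a * ((b + 3) * (2 * Z + 3))).
Proof.
move=> hrK; elim: a g c => [|a IH] g c hZ.
  by rewrite addn0 mul0n addn0; exact: reaches_refl.
have -> : g + a.+1 = g.+1 + a by lia.
have -> : c + a.+1 * b = c + b + a * b by rewrite mulSn; lia.
rewrite mulSn.
by apply: reaches_trans (@reaches_consume_counter g a c Z hrK _) (IH g.+1 (c + b) _); nia.
Qed.

Lemma reaches_round_end G C :
  reaches (round_cfg r G 0 C)
          (cfg (st r 7) (nseq G 10 ++ 4 :: nseq b 5 ++ Lx) (10 :: nseq C 7 ++ [:: 11]))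
          (2 * C + 2).
Proof.
set L := nseq G 10 ++ 4 :: nseq b 5 ++ Lx.
have r1 := reaches_right L (nseq C 9) (ne 0 isT) (trR 0 11 isT).
have r2 := @sweep_right halt tr (st r 6) (fun=> 7) (nseq C 9) (10 :: L) [::] (ne 6 isT).
rewrite map_nseq rev_nseq size_nseq cats0 in r2.
have r3 := @sweep_left halt tr (st r 6) 0 11 (st r 7) id (nseq C 7) (10 :: L) [::]
             (ne 6 isT) (ne 7 isT) (trR 6 0 isT).
rewrite map_id rev_nseq size_nseq in r3.
apply: reaches_le (reaches_trans r1 (reaches_trans (r2 _) (r3 _))); first by lia.
- by move=> x /nseqP[-> _]; rewrite round_trE.
- by move=> x /nseqP[-> _]; rewrite round_trE.
Qed.

End Round.

Lemma reaches_next_round r G C : r.+1 < K ->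
  reaches (round_cfg r G 0 C) (round_cfg r.+1 G.+1 C 0) (2 * C + 3).
Proof.
move=> hrK; have hr : r <= K by lia.
have r2 := reaches_right (nseq G 10 ++ 4 :: nseq b 5 ++ Lx) (nseq C 7 ++ [:: 11])
             (round_not_halting d N hr (isT : 7 < 8))
             (_ : tr (st r 7) 10 = (st r.+1 0, 10, true)).
apply: reaches_le (reaches_trans (reaches_round_end hr G C) (r2 _)); first by lia.
by rewrite round_trE //= hrK.
Qed.

Lemma reaches_last_round r G C Z : r.+1 = K -> 2 * b + 2 + G.+1 + C <= Z ->
  reaches (round_cfg r G 0 C)
          (cfg (d + out_st K 0) Lx (nseq b 5 ++ 4 :: nseq G.+1 10 ++ nseq C 7 ++ 11 :: nseq b 9))
          (2 * C + 2 + (G + b + 3) + b * (2 * Z + 3) + (b + 2)).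
Proof.
move=> hrK hZ; have hr : r <= K by lia.
set Mid := nseq G.+1 10 ++ nseq C 7 ++ [:: 11].
have hM : {in Mid, forall x, (x != 0) && (x != 6)}.
  by move=> x; rewrite !mem_cat mem_seq1 => /or3P[/nseqP[-> _]|/nseqP[-> _]|/eqP ->].
have r2 := @reaches_block_start K (leqnn K) (st r 7) 10 10 G (nseq C 7 ++ [:: 11])
             (round_not_halting d N hr (isT : 7 < 8)) _.
have r3 := @reaches_copy_block K (leqnn K) Lx Mid 0 b 0 Z hM.
have r4 := @reaches_restore_block K (leqnn K) (Mid ++ nseq b 9).
rewrite ltnn add0n in r3 r4.
rewrite nseq_cat_cons in r2; rewrite /Mid -!catA /= in r2 r3 r4.
apply: reaches_le (reaches_trans (reaches_round_end hr G C)
  (reaches_trans (r2 _) (reaches_trans (r3 _) r4))); first by lia.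
- by rewrite round_trE //= hrK ltnn.
- by rewrite /Mid !size_cat !size_nseq /=; lia.
Qed.

Lemma reaches_rounds r : 0 < b -> r < K ->
  reaches (round_cfg 0 0 1 0) (round_cfg r (spent b r) (b ^ r) 0) (r * round_cost b K).
Proof.
move=> hb; elim: r => [|r IH] hr; first by rewrite /spent big_geq // expn0; exact: reaches_refl.
have hZ : b + 1 + (spent b r + b ^ r) + 1 + (0 + b ^ r * b) <= work_bound b K.
  have := leq_spent b (ltnW hr); have := leq_pexp2l hb (ltnW hr).
  by rewrite spentS -expnSr /work_bound; lia.
have r1 := @reaches_consume_counters r (ltnW (ltnW hr)) (spent b r) (b ^ r) 0 _ (ltnW hr) hZ.
have r2 := @reaches_next_round r (spent b r + b ^ r) (0 + b ^ r * b) hr.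
rewrite add0n -expnSr in r1 r2; rewrite -[(_ + b ^ r).+1]addn1 -spentS in r2.
apply: reaches_le (reaches_trans (IH (ltnW hr)) (reaches_trans r1 r2)).
have := leq_pexp2l hb (ltnW hr); have := leq_pexp2l hb (ltnW (ltnW hr)).
by rewrite mulSn /round_cost; nia.
Qed.

Lemma reaches_all_rounds : 0 < b -> 0 < K ->
  reaches (round_cfg 0 0 1 0)
          (cfg (d + out_st K 0) Lx
               (nseq b 5 ++ 4 :: nseq (spent b K) 10 ++ nseq (b ^ K) 7 ++ 11 :: nseq b 9))
          (K.+1 * round_cost b K).
Proof.
move=> hb hK0; have [K' hK] : exists K', K = K'.+1 by exists K.-1; rewrite prednK.
have hZ : b + 1 + (spent b K' + b ^ K') + 1 + (0 + b ^ K' * b) <= work_bound b K.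
  by rewrite hK /work_bound spentS -expnSr; lia.
have r1 := reaches_rounds hb (_ : K' < K).
have r2 := @reaches_consume_counters K' _ (spent b K') (b ^ K') 0 _ _ hZ.
have r3 := @reaches_last_round K' (spent b K' + b ^ K') (b ^ K' * b) (work_bound b K) (esym hK).
rewrite add0n -expnSr -hK in r2; rewrite -[(_ + b ^ K').+1]addn1 -spentS -expnSr -hK in r3.
apply: reaches_le (reaches_trans (r1 _) (reaches_trans (r2 _ _) (r3 _)));
  try lia; last by rewrite /work_bound.
have hpow : b ^ K' <= b ^ K by rewrite hK leq_pexp2l.
have hpow1 : 0 < b ^ K by rewrite expn_gt0 hb.
have hsp : spent b K' + b ^ K' < spent b K by rewrite hK spentS; lia.
apply: (@leq_trans (K'.+2 * round_cost b K)); last by rewrite hK.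
rewrite !mulSn /round_cost; set Z := work_bound b K; set X := (b + 3) * (2 * Z + 3).
have hX1 : b ^ K' * X <= b ^ K * X := leq_mul hpow (leqnn X).
have hX2 : X <= b ^ K * X := leq_pmull X hpow1.
have hX3 : X = b * (2 * Z + 3) + 3 * (2 * Z + 3) by rewrite /X mulnDl.
have hZ' : spent b K' + b ^ K' + 2 * b <= Z by rewrite /Z /work_bound; lia.
lia.
Qed.

End Rounds.

Definition unary_len (b K : nat) := b + 1 + spent b K + b ^ K.

Section UnaryArgPhases.
Variables (d K : nat) (N : TM).
Local Notation halt := (tm_nstate N + (d + out_st K 4)).
Local Notation tr := (prefix_ntrans (d + out_st K 4) (after_skip d (unary_arg_tr K)) N).
Local Notation reaches := (reaches halt tr).
Local Notation sn k := (@setup_not_halting d K N k isT).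
Local Notation on k := (@output_not_halting d K N k isT).
Local Notation ts k a := (@setup_trE d K N k a isT).
Local Notation to k a := (@output_trE d K N k a isT).

Lemma reaches_setup (ms : seq nat) p : size ms = d ->
  let W := enc_bins ms in
  reaches (cfg 0 [::] (W ++ nseq p 2))
          (round_cfg d p.+2 (head 0 (rev W)) (behead (rev W)) 0 0 1 0) (size W + p + 7).
Proof.
move=> hms W; set x0 := head 0 (rev W); set L0 := behead (rev W).
have r1 := @reaches_skip_bins halt tr d ms (nseq p 2) hms.
have ne0 : d != halt by apply: prefix_state_not_halting; rewrite /out_st; lia.
have tr0 a : tr d a = (d + 1, a, false) by have := ts 0 a; rewrite addn0.
(* One step left and back makes the left part nonempty: a blank when [ms = [::]]. *)
have r2 := reaches_left (rev W) (behead (nseq p 2)) ne0 (tr0 (head 0 (nseq p 2))).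
have r3 := reaches_right L0 (head 0 (nseq p 2) :: behead (nseq p 2)) (sn 1)
             (_ : tr (d + 1) x0 = (d + 2, x0, true)).
have r4 := @sweep_right halt tr (d + 2) (fun=> 5) (nseq p 2) (x0 :: L0) [::] (sn 2).
rewrite map_nseq rev_nseq size_nseq cats0 in r4.
have r5 : reaches (cfg (d + 2) (nseq p 5 ++ x0 :: L0) [::])
            (round_cfg d p.+2 x0 L0 0 0 1 0) 5.
  apply: reaches_trans (reaches_right _ [::] (sn 2) (ts 2 0)) _.
  apply: reaches_trans (reaches_right _ [::] (sn 3) (ts 3 0)) _.
  apply: reaches_trans (reaches_right _ [::] (sn 4) (ts 4 0)) _.
  apply: reaches_trans (reaches_right _ [::] (sn 5) (ts 5 0)) _.
  exact: (reaches_left _ [::] (sn 6) (ts 6 0)).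
apply: reaches_le (reaches_trans (r1 _ _) (reaches_trans r2 (reaches_trans (r3 _)
  (reaches_trans (r4 _) r5)))); first by rewrite /W; lia.
- by rewrite /out_st; lia.
- by move=> q a hq; rewrite prefix_ntrans_pre ?after_skip_skip //; rewrite /out_st; lia.
- by rewrite (ts 1 x0).
- by move=> x /nseqP[-> _]; rewrite (ts 2 2).
Qed.

Lemma reaches_unary_output x0 L0 (Pre : seq nat) b :
  {in Pre, forall x, (x != 0) && (x != 3)} ->
  reaches (cfg (d + out_st K 0) (x0 :: L0) (Pre ++ 11 :: nseq b 9))
          (cfg (d + out_st K 2) L0 (x0 :: nseq (size Pre) 2 ++ 3 :: nseq b 2 ++ [:: 0]))
          (2 * size Pre + 2 * b + 3).
Proof.
move=> hP; set Reg := Pre ++ 11 :: nseq b 9.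
have r1 := @sweep_right halt tr (d + out_st K 0) id Reg (x0 :: L0) [::] (on 0).
rewrite map_id cats0 /Reg rev_cat rev_cons rev_nseq -cats1 -!catA /= in r1.
have r2 := @sweep_left halt tr _ 0 0 (d + out_st K 1) (fun=> 2) (nseq b 9)
             (11 :: rev Pre ++ x0 :: L0) [::] (on 0) (on 1) (to 0 0).
rewrite map_nseq rev_nseq size_nseq in r2.
have r3 := @sweep_left halt tr _ 11 3 (d + out_st K 2) (fun=> 2) (rev Pre) (x0 :: L0)
             (nseq b 2 ++ [:: 0]) (on 1) (on 2) (to 1 11).
have e : rev (map (fun=> 2) (rev Pre)) = nseq (size Pre) 2.
  by rewrite map_rev revK; elim: (Pre) => //= y s ->.
rewrite e size_rev in r3.
apply: reaches_le (reaches_trans (r1 _) (reaches_trans (r2 _) (r3 _))).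
- by rewrite /Reg size_cat /= size_nseq; lia.
- move=> x; rewrite /Reg mem_cat in_cons => /or3P[/hP /andP[/negbTE hx _]|/eqP ->|/nseqP[-> _]].
  + by rewrite (to 0 x) /= hx.
  + by rewrite (to 0 11).
  + by rewrite (to 0 9).
- by move=> x /nseqP[-> _]; rewrite (to 1 9).
- by move=> x; rewrite mem_rev => /hP /andP[/negbTE h0 /negbTE h3]; rewrite (to 2 x) /= h3 h0.
Qed.

Lemma reaches_return_start (W rest : seq nat) :
  {in W, forall x, x != 0} -> last 3 W = 3 ->
  reaches (cfg (d + out_st K 2) (behead (rev W)) (head 0 (rev W) :: rest))
          (cfg (d + out_st K 4) [:: 0] (W ++ rest)) (size W + 1).
Proof.
case/lastP: W => [|W z] hW; first by move=> _; exact: (reaches_right [::] rest (on 2) (to 2 0)).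
rewrite last_rcons rev_rcons => -> /=.
have r1 := @sweep_left halt tr _ 3 3 (d + out_st K 3) id (rev W) [::] rest (on 2) (on 3) (to 2 3).
rewrite map_id revK cats0 size_rev in r1.
have r2 := reaches_right [::] (W ++ 3 :: rest) (on 3) (to 3 0).
rewrite cat_rcons size_rcons -addn1.
apply: reaches_trans (r1 _) r2.
by move=> x; rewrite mem_rev => hx; rewrite (to 3 x) /= ifN // hW // mem_rcons inE hx orbT.
Qed.

Lemma unary_arg_TM_runs (ms : seq nat) p t v : size ms = d -> 0 < K -> basic_word v ->
  let W := enc_bins ms in
  tm_runs N (W ++ nseq (unary_len p.+2 K) 2 ++ 3 :: nseq p.+2 2) t v ->
  tm_runs (unary_arg_TM d K N) (W ++ nseq p 2)
    (size W + p + 7 + K.+1 * round_cost p.+2 K + (2 * unary_len p.+2 K + 2 * p.+2 + 3)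
     + (size W + 1) + t) v.
Proof.
move=> hms hK hv W hrun; set b := p.+2.
set x0 := head 0 (rev W); set L0 := behead (rev W).
have hx0 : (x0 == 3) || (x0 == 0).
  by rewrite /x0 /W; have := last_enc_bins ms; case/lastP: (enc_bins ms) => // s z;
    rewrite last_rcons rev_rcons => ->.
set Pre := nseq b 5 ++ 4 :: nseq (spent b K) 10 ++ nseq (b ^ K) 7.
have hP : {in Pre, forall x, (x != 0) && (x != 3)}.
  move=> x; rewrite /Pre mem_cat => /orP[/nseqP[-> _] //|].
  by rewrite in_cons mem_cat => /or3P[/eqP -> //||] /nseqP[-> _].
have r3 := @reaches_unary_output x0 L0 Pre b hP.
have r4 := reaches_return_start (nseq (size Pre) 2 ++ 3 :: nseq b 2 ++ [:: 0])
             (fun x => @enc_bins_neq0 ms x) (last_enc_bins ms).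
have ePre : size Pre = unary_len b K.
  by rewrite /Pre size_cat /= size_cat !size_nseq /unary_len; lia.
rewrite ePre in r3 r4; rewrite /Pre -!catA cat_cons -!catA in r3.
have pre : reaches (cfg 0 [::] (W ++ nseq p 2))
    (cfg (d + out_st K 4) [:: 0] ((W ++ nseq (unary_len b K) 2 ++ 3 :: nseq b 2) ++ nseq 1 0))
    (size W + p + 7 + K.+1 * round_cost b K + (2 * unary_len b K + 2 * b + 3) + (size W + 1)).
  rewrite -!catA cat_cons.
  apply: reaches_trans (reaches_trans (reaches_trans (reaches_setup p hms) _) r3) r4.
  exact: reaches_all_rounds.
apply: tm_runs_prefix pre hrun => //.
- exact: unary_arg_bounded.
- by rewrite !basic_word_cat basic_word_enc_bins basic_word_nseq //=; exact: basic_word_nseq.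
- by rewrite basic_word_cat basic_word_enc_bins basic_word_nseq.
Qed.

End UnaryArgPhases.

(** * From a rational approximation scheme to a computable function *)

Lemma leq_expn2r m n e : m <= n -> m ^ e <= n ^ e.
Proof. by move=> h; elim: e => // e IH; rewrite !expnS leq_mul. Qed.

Lemma nat_poly_le cs x : \sum_(i < size cs) nth 0 cs i * x ^ i <= sumn cs * x.+1 ^ size cs.
Proof.
rewrite sumnE (big_nth 0) big_mkord big_distrl leq_sum // => i _.
rewrite leq_mul2l (leq_trans (leq_expn2r i (leqnSn x))) ?orbT //.
exact/leq_pexp2l/ltnW.
Qed.

Lemma nat_poly_lt_pow cs x : 0 < x ->
  \sum_(i < size cs) nth 0 cs i * x ^ i < x.+1 ^ (size cs + sumn cs).
Proof.
move=> hx; apply: leq_ltn_trans (nat_poly_le cs x) _.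
by rewrite expnD mulnC ltn_pmul2l ?expn_gt0 // ltn_expl // ltnS.
Qed.

Lemma approx_ptime_computable (R : realType) d d' (F : d.-tuple nat -> 'I_d' -> R) f g :
  poly_modulus_approx F f g -> ptime_computable F.
Proof.
case=> [[N [cN Hf]] [Hfg [Hg0 [_ [P [[cs hP] modP]]]]]].
set K := (size cs + sumn cs).+1.
have [c hc] : poly_bounded (fun x : nat * nat => x.1 + x.2) (fun x =>
    x.1 + d + x.2 + 7 + K.+1 * round_cost x.2.+2 K + (2 * unary_len x.2.+2 K + 2 * x.2.+2 + 3)
    + (x.1 + d + 1) + cN * (x.1 + unary_len x.2.+2 K + x.2.+2).+1 ^ cN).
  by rewrite /round_cost /work_bound /unary_len /spent; poly_bounded.
exists (unary_arg_TM d K N), c => ms us p.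
set b := p.+2; set n := unary_len b K.
have [t [qs [ht [hrun hsup]]]] := Hf ms [tuple n] b.
exists (size (enc_bins ms) + p + 7 + K.+1 * round_cost b K + (2 * n + 2 * b + 3)
        + (size (enc_bins ms) + 1) + t), qs; split; [|split].
- rewrite input_size1 /= in ht; rewrite input_size0 size_enc_bins size_tuple.
  by apply: leq_trans (hc (_, p)); rewrite leq_add2l.
- rewrite enc_input0; apply: unary_arg_TM_runs (size_tuple _) _ (basic_word_enc_dyadics _) _ => //.
  by rewrite enc_input1 in hrun.
- have hn : P p.+1 < n.
    rewrite hP; apply: leq_trans (nat_poly_lt_pow cs (ltn0Sn p)) _.
    by apply: leq_trans (leq_addl _ _); rewrite leq_pexp2l.
  have hg : (ratr (g ms n) <= (2%:R ^+ p.+1 : R)^-1)%R.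
    by rewrite -ratr_pow2V ler_rat -(ger0_norm (Hg0 ms n)) modP.
  apply: le_trans (supnorm_sub_le hsup (le_trans (Hfg ms n) hg)) _.
  exact: pow2V_addSS.
Qed.

Local Open Scope ring_scope.

Theorem mainTheorem12 (R : realType) (d d' : nat)
  (F : d.-tuple nat -> 'I_d' -> R) :
  ptime_computable F <->
  exists (f : d.-tuple nat -> nat -> 'I_d' -> rat)
         (g : d.-tuple nat -> nat -> rat),
    ptime_computable_unary R f /\
    (forall m n, supnorm (fun i => ratr (f m n i) - F m i) <= ratr (g m n)) /\
    (forall m n, 0 <= g m n) /\
    (forall m, tends_to_zero (g m)) /\
    (exists p : nat -> nat, is_nat_poly p /\ uniform_modulus g p).
Proof.
split; first exact: ptime_computable_approx.
by case=> f [g]; exact: approx_ptime_computable.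
Qed.
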